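(* Let $\gamma\in(0.5,1)$ and let $a:[0,\infty)\to[0,\infty)$ be a decreasing, bounded, piecewise continuous function such that $\lim_{t\to\infty}t^{\gamma}a(t)$ exists and is positive. Then for any given $\mu>0$ and $p>2$, \[ e^{-\mu\int_0^t a(s)\,ds}=o\big(t^{-\frac{p\gamma}{2}}\big)\quad (t\to\infty), \] and \[ \lim_{t\to\infty} t^{\frac{p\gamma}{2}}\int_0^t a^{\frac{p+2}{2}}(s)\,e^{-\mu\int_s^t a(r)\,dr}\,ds=\frac{\big(\lim_{t\to\infty}t^{\gamma}a(t)\big)^{\frac{p}{2}}}{\mu}. \]
   Context: $f(t)=o(g(t))$ means $\limsup_{t\to\infty}|f(t)/g(t)|=0$. *)

From Stdlib Require Import Reals List.
From Coquelicot Require Import Coquelicot.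
Open Scope R_scope.

Definition decreasing_on_nonneg (a : R -> R) : Prop :=
  forall x y, 0 <= x -> x <= y -> a y <= a x.

Definition bounded_on_nonneg (a : R -> R) : Prop :=
  exists M, forall x, 0 <= x -> Rabs (a x) <= M.

Definition piecewise_continuous_on_nonneg (a : R -> R) : Prop :=
  forall b, 0 < b -> exists l : list R,
    (forall x, 0 < x < b -> ~ In x l -> continuous a x) /\
    (forall x, 0 <= x < b -> exists r, filterlim a (at_right x) (locally r)) /\
    (forall x, 0 < x <= b -> exists r, filterlim a (at_left x) (locally r)).

From Stdlib Require Import Reals List Lra Psatz.
From Coquelicot Require Import Coquelicot.
Open Scope R_scope.

(* Write A(t) = int_0^t a.  Since a decreases, A(t) >= (t/2) a(t), which grows like
   t^(1 - gamma); hence e^(-mu A(t)) decays faster than any power of t.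

   For the second limit put c = p/2, J(t) = int_0^t a^(c+1) e^(mu A) and
   psi(t) = t^(-gamma c) e^(mu A(t)), so that the integral in the statement is
   e^(-mu A(t)) J(t) and t^(gamma c) e^(-mu A(t)) = 1/psi(t).  We have
   J' = a^c * a e^(mu A) and psi' = (mu a - gamma c / t) t^(-gamma c) e^(mu A).  For large s,
   a(s)^c is within a factor 1 +- eta of L^c s^(-gamma c) and 1/s <= eta a(s), so J' lies
   between (1 - eta) L^c/mu psi' and (1 + eta)/(1 - gamma c eta/mu) L^c/mu psi'.  These
   bounds integrate (by the mean value theorem between the finitely many jumps of a)
   from a fixed T to t, and dividing by psi(t) -> oo gives J(t)/psi(t) -> L^c/mu. *)

Lemma ball_Rabs (x e z : R) : ball x e z <-> Rabs (z - x) < e.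
Proof. reflexivity. Qed.

Lemma exp_le_compat (x y : R) : x <= y -> exp x <= exp y.
Proof. intros [Hxy| ->]; [left; apply exp_increasing, Hxy|right; reflexivity]. Qed.

Lemma Rpower_continuous (q y : R) : 0 < y -> continuous (fun z => Rpower z q) y.
Proof.
  intros Hy. apply (@ex_derive_continuous R_AbsRing R_NormedModule).
  exists (q * Rpower y (q - 1)). apply is_derive_Reals, derivable_pt_lim_power, Hy.
Qed.

Lemma Rpower_succ (y q : R) : 0 < y -> Rpower y (q + 1) = Rpower y q * y.
Proof. intros Hy. rewrite Rpower_plus, Rpower_1 by exact Hy. reflexivity. Qed.

Lemma Rpower_split (t q : R) : 0 < t -> t = Rpower t (1 - q) * Rpower t q.
Proof.
  intros Ht. rewrite <- Rpower_plus. replace (1 - q + q) with 1 by ring.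
  symmetry. apply Rpower_1, Ht.
Qed.

Lemma Rbar_mult_pos_p_infty (x : R) : 0 < x -> Rbar_mult x p_infty = p_infty.
Proof.
  intros Hx. apply is_Rbar_mult_unique, is_Rbar_mult_sym, is_Rbar_mult_p_infty_pos, Hx.
Qed.

Lemma interval_split_ind (P : R -> R -> Prop) (l : list R) :
  (forall u v, u <= v -> (forall z, u < z < v -> ~ In z l) -> P u v) ->
  (forall u w v, u <= w -> w <= v -> P u w -> P w v -> P u v) ->
  forall u v, u <= v -> P u v.
Proof.
  intros Hbase Hsplit.
  enough (H : forall l' u v, u <= v ->
            (forall z, u < z < v -> In z l -> In z l') -> P u v)
    by (intros u v Huv; apply (H l); auto).
  induction l' as [|w l' IH]; intros u v Huv Hin.
  - apply Hbase; [exact Huv|]. intros z Hz Hzl. exact (Hin z Hz Hzl).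
  - assert (Hdrop : forall x y, u <= x -> x <= y -> y <= v -> ~ (x < w < y) -> P x y).
    { intros x y Hux Hxy Hyv Hw. apply IH; [exact Hxy|].
      intros z Hz Hzl. destruct (Hin z ltac:(lra) Hzl) as [->|]; [lra|assumption]. }
    destruct (Rlt_dec u w) as [Huw|Huw]; [destruct (Rlt_dec w v) as [Hwv|Hwv]|].
    + apply (Hsplit u w v); try lra; apply Hdrop; lra.
    + apply Hdrop; lra.
    + apply Hdrop; lra.
Qed.

Lemma le_of_is_derive_nonneg (f df : R -> R) (l : list R) (u v : R) : u <= v ->
  (forall x, u <= x <= v -> continuous f x) ->
  (forall x, u < x < v -> ~ In x l -> is_derive f x (df x) /\ 0 <= df x) ->
  f u <= f v.
Proof.
  intros Huv Hc Hd.
  enough (H : forall x y, x <= y -> u <= x -> y <= v -> f x <= f y) by (apply H; lra).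
  apply (interval_split_ind (fun x y => u <= x -> y <= v -> f x <= f y) l).
  - intros x y Hxy Hl Hux Hyv.
    (* [MVT_gen] may pick an endpoint, where [df] is uncontrolled; the clamp covers it *)
    destruct (MVT_gen f x y (fun z => Rmax 0 (df z))) as [c [_ Hc']]; simpl;
      rewrite ?Rmin_left, ?Rmax_right by lra.
    + intros z Hz. destruct (Hd z ltac:(lra) (Hl z Hz)) as [Hdz Hpos].
      rewrite Rmax_right by lra. exact Hdz.
    + intros z Hz. apply continuity_pt_filterlim, Hc. lra.
    + pose proof (Rmax_l 0 (df c)). nra.
  - intros x w y Hxw Hwy Hl Hr Hux Hyv.
    specialize (Hl Hux ltac:(lra)). specialize (Hr ltac:(lra) Hyv). lra.
Qed.

Definition pc_on (f : R -> R) (b : R) (l : list R) : Prop :=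
  (forall x, 0 < x < b -> ~ In x l -> continuous f x) /\
  (forall x, 0 <= x < b -> exists r, filterlim f (at_right x) (locally r)) /\
  (forall x, 0 < x <= b -> exists r, filterlim f (at_left x) (locally r)).

Lemma continuous_of_at_left_at_right (f : R -> R) (x : R) :
  filterlim f (at_left x) (locally (f x)) ->
  filterlim f (at_right x) (locally (f x)) ->
  continuous f x.
Proof.
  intros Hl Hr. apply filterlim_locally. intros eps.
  destruct (proj1 (filterlim_locally _ _) Hl eps) as [d1 H1].
  destruct (proj1 (filterlim_locally _ _) Hr eps) as [d2 H2].
  exists (mkposreal _ (Rmin_pos _ _ (cond_pos d1) (cond_pos d2))). intros z Hz.
  destruct (Rtotal_order z x) as [Hzx|[->|Hzx]].
  - apply H1; [|exact Hzx]. eapply Rlt_le_trans; [exact Hz|apply Rmin_l].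
  - apply ball_center.
  - apply H2; [|exact Hzx]. eapply Rlt_le_trans; [exact Hz|apply Rmin_r].
Qed.

Lemma ex_RInt_of_one_sided_limits (f : R -> R) (x y r1 r2 : R) : x < y ->
  (forall z, x < z < y -> continuous f z) ->
  filterlim f (at_right x) (locally r1) ->
  filterlim f (at_left y) (locally r2) ->
  ex_RInt f x y.
Proof.
  intros Hxy Hc Hr Hl.
  (* [f] glued with its one-sided limits is continuous on [[x, y]] *)
  set (g := fun z => if Rle_dec z x then r1 else if Rle_dec y z then r2 else f z).
  apply (ex_RInt_ext g).
  { rewrite Rmin_left, Rmax_right by lra. intros z Hz. unfold g.
    destruct (Rle_dec z x); [lra|]. destruct (Rle_dec y z); [lra|reflexivity]. }
  apply (@ex_RInt_continuous R_CompleteNormedModule).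
  rewrite Rmin_left, Rmax_right by lra. intros z Hz.
  assert (Hgx : g x = r1) by (unfold g; destruct (Rle_dec x x); [reflexivity|lra]).
  assert (Hgy : g y = r2)
    by (unfold g; destruct (Rle_dec y x); [lra|]; destruct (Rle_dec y y); [reflexivity|lra]).
  assert (Hpos : 0 < y - x) by lra.
  destruct (Req_dec z x) as [->|Hzx]; [|destruct (Req_dec z y) as [->|Hzy]].
  - apply continuous_of_at_left_at_right; rewrite Hgx.
    + apply (filterlim_ext_loc (fun _ => r1)); [|apply filterlim_const].
      exists (mkposreal _ Hpos). intros w _ Hw. unfold g.
      destruct (Rle_dec w x); [reflexivity|lra].
    + apply (filterlim_ext_loc f); [|exact Hr].
      exists (mkposreal _ Hpos). intros w Hw Hxw; change R in w.
      apply (proj1 (ball_Rabs _ _ _)), Rabs_def2 in Hw; simpl in Hw. unfold g.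
      destruct (Rle_dec w x); [lra|]. destruct (Rle_dec y w); [lra|reflexivity].
  - apply continuous_of_at_left_at_right; rewrite Hgy.
    + apply (filterlim_ext_loc f); [|exact Hl].
      exists (mkposreal _ Hpos). intros w Hw Hwy; change R in w.
      apply (proj1 (ball_Rabs _ _ _)), Rabs_def2 in Hw; simpl in Hw. unfold g.
      destruct (Rle_dec w x); [lra|]. destruct (Rle_dec y w); [lra|reflexivity].
    + apply (filterlim_ext_loc (fun _ => r2)); [|apply filterlim_const].
      exists (mkposreal _ Hpos). intros w _ Hw. unfold g.
      destruct (Rle_dec w x); [lra|]. destruct (Rle_dec y w); [reflexivity|lra].
  - apply (continuous_ext_loc (g : R -> R_UniformSpace) f z); [|apply Hc; lra].
    assert (Hd : 0 < Rmin (z - x) (y - z)) by (apply Rmin_glb_lt; lra).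
    exists (mkposreal _ Hd). intros w Hw.
    apply (proj1 (ball_Rabs _ _ _)), Rabs_def2 in Hw; simpl in Hw.
    pose proof (Rmin_l (z - x) (y - z)). pose proof (Rmin_r (z - x) (y - z)). unfold g.
    destruct (Rle_dec w x); [lra|]. destruct (Rle_dec y w); [lra|reflexivity].
Qed.

Lemma ex_RInt_pc_on (f : R -> R) (b : R) (l : list R) (u v : R) : pc_on f b l ->
  0 <= u -> u <= v -> v <= b -> ex_RInt f u v.
Proof.
  intros [Hc [Hr Hl]] Hu Huv Hvb.
  revert Hu Hvb. revert u v Huv.
  apply (interval_split_ind (fun u v => 0 <= u -> v <= b -> ex_RInt f u v) l).
  - intros u v Huv Hnl Hu Hvb.
    destruct (Req_dec u v) as [<-|Hne]; [apply ex_RInt_point|].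
    destruct (Hr u ltac:(lra)) as [r1 Hr1]. destruct (Hl v ltac:(lra)) as [r2 Hl2].
    apply (ex_RInt_of_one_sided_limits f u v r1 r2); [lra| |exact Hr1|exact Hl2].
    intros z Hz. apply Hc; [lra|]. apply Hnl; exact Hz.
  - intros u w v Huw Hwv Hl1 Hl2 Hu Hvb.
    apply (ex_RInt_Chasles f u w v); [apply Hl1|apply Hl2]; lra.
Qed.

Lemma filterlim_ge (F : (R -> Prop) -> Prop) {FF : ProperFilter F} (f : R -> R) (m r : R) :
  F (fun z => m <= f z) -> filterlim f F (locally r) -> m <= r.
Proof.
  intros Hm Hf.
  exact (filterlim_le (F := F) (fun _ => m) f m r Hm (filterlim_const m) Hf).
Qed.

Lemma pc_on_comp (phi f : R -> R) (b m : R) (l : list R) : pc_on f b l ->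
  (forall x, 0 <= x <= b -> m <= f x) -> (forall y, m <= y -> continuous phi y) ->
  pc_on (fun s => phi (f s)) b l.
Proof.
  intros [Hc [Hr Hl]] Hm Hphi. split; [|split].
  - intros x Hx Hnl. apply continuous_comp; [apply Hc; assumption|apply Hphi, Hm; lra].
  - intros x Hx. destruct (Hr x Hx) as [r Hfr]. exists (phi r).
    apply (filterlim_comp _ _ _ f phi _ (locally r)); [exact Hfr|apply Hphi].
    apply (filterlim_ge (at_right x) f m r); [|exact Hfr].
    exists (mkposreal (b - x) ltac:(lra)). intros z Hz Hxz.
    apply (proj1 (ball_Rabs _ _ _)), Rabs_def2 in Hz; simpl in Hz. apply Hm; lra.
  - intros x Hx. destruct (Hl x Hx) as [r Hfr]. exists (phi r).
    apply (filterlim_comp _ _ _ f phi _ (locally r)); [exact Hfr|apply Hphi].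
    apply (filterlim_ge (at_left x) f m r); [|exact Hfr].
    exists (mkposreal x ltac:(lra)). intros z Hz Hzx.
    apply (proj1 (ball_Rabs _ _ _)), Rabs_def2 in Hz; simpl in Hz. apply Hm; lra.
Qed.

Lemma pc_on_mult (f k : R -> R) (b : R) (l : list R) : pc_on f b l ->
  (forall x, 0 < x <= b -> continuous k x) -> filterlim k (at_right 0) (locally (k 0)) ->
  pc_on (fun s => f s * k s) b l.
Proof.
  intros [Hc [Hr Hl]] Hk Hk0.
  assert (Hkr : forall x, 0 <= x < b -> filterlim k (at_right x) (locally (k x))).
  { intros x Hx. destruct (Req_dec x 0) as [->|Hx0]; [exact Hk0|].
    eapply filterlim_filter_le_1; [apply filter_le_within|]. apply Hk; lra. }
  split; [|split].
  - intros x Hx Hnl. apply (continuous_mult f k); [apply Hc; assumption|apply Hk; lra].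
  - intros x Hx. destruct (Hr x Hx) as [r Hfr]. exists (r * k x).
    apply (filterlim_comp_2 f k Rmult Hfr (Hkr x Hx)), (@filterlim_mult R_AbsRing).
  - intros x Hx. destruct (Hl x Hx) as [r Hfr]. exists (r * k x).
    assert (Hkl : filterlim k (at_left x) (locally (k x)))
      by (eapply filterlim_filter_le_1; [apply filter_le_within|]; apply Hk; lra).
    apply (filterlim_comp_2 f k Rmult Hfr Hkl), (@filterlim_mult R_AbsRing).
Qed.

Definition ex_RInt_on_nonneg (f : R -> R) : Prop :=
  forall u v, 0 <= u -> u <= v -> ex_RInt f u v.

Lemma ex_RInt_on_nonneg_pc (f : R -> R) :
  (forall b, 0 < b -> exists l, pc_on f b l) -> ex_RInt_on_nonneg f.
Proof.
  intros Hpc u v Hu Huv. destruct (Hpc (v + 1) ltac:(lra)) as [l Hl].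
  apply (ex_RInt_pc_on f (v + 1) l); assumption || lra.
Qed.

Lemma locally_is_RInt_0 (f : R -> R) (x : R) : ex_RInt_on_nonneg f -> 0 < x ->
  locally x (fun z => is_RInt f 0 z (RInt f 0 z)).
Proof.
  intros Hf Hx. exists (mkposreal x Hx). intros z Hz.
  apply (proj1 (ball_Rabs _ _ _)), Rabs_def2 in Hz; simpl in Hz.
  apply (@RInt_correct R_CompleteNormedModule), Hf; lra.
Qed.

Lemma continuous_RInt_0 (f : R -> R) (x : R) : ex_RInt_on_nonneg f -> 0 < x ->
  continuous (fun z => RInt f 0 z) x.
Proof. intros Hf Hx. exact (continuous_RInt_1 f 0 x _ (locally_is_RInt_0 f x Hf Hx)). Qed.

Lemma is_derive_RInt_0 (f : R -> R) (x : R) : ex_RInt_on_nonneg f -> 0 < x ->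
  continuous f x -> is_derive (fun z => RInt f 0 z) x (f x).
Proof. intros Hf Hx. exact (is_derive_RInt f _ 0 x (locally_is_RInt_0 f x Hf Hx)). Qed.

Lemma filterlim_RInt_0_at_right (f : R -> R) (b M : R) : 0 < b -> ex_RInt_on_nonneg f ->
  (forall x, 0 <= x <= b -> Rabs (f x) <= M) ->
  filterlim (fun z => RInt f 0 z) (at_right 0) (locally 0).
Proof.
  intros Hb Hf HM. apply filterlim_locally. intros eps.
  assert (HM0 : 0 <= M) by (eapply Rle_trans; [apply Rabs_pos|apply (HM 0)]; lra).
  assert (Hd : 0 < Rmin b (eps / (M + 1))).
  { apply Rmin_glb_lt; [exact Hb|]. apply Rdiv_lt_0_compat; [apply cond_pos|lra]. }
  exists (mkposreal _ Hd). intros z Hz Hz0.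
  apply (proj1 (ball_Rabs _ _ _)), Rabs_def2 in Hz; simpl in Hz.
  pose proof (Rmin_l b (eps / (M + 1))). pose proof (Rmin_r b (eps / (M + 1))).
  apply (proj2 (ball_Rabs _ _ _)). rewrite Rminus_0_r.
  assert (Hint : Rabs (RInt f 0 z) <= (z - 0) * M).
  { apply abs_RInt_le_const; [lra|apply Hf; lra|]. intros t Ht. apply HM. lra. }
  assert (Hz' : z * (M + 1) < eps).
  { replace (pos eps) with (eps / (M + 1) * (M + 1)) by (field; lra).
    apply Rmult_lt_compat_r; lra. }
  nra.
Qed.

Lemma filterlim_of_continuous_bounds (F : (R -> Prop) -> Prop) {FF : Filter F}
    (f lo hi : R -> R) (l e0 : R) :
  0 < e0 -> continuous lo 0 -> continuous hi 0 -> lo 0 = l -> hi 0 = l ->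
  (forall e, 0 < e < e0 -> F (fun t => lo e <= f t <= hi e)) ->
  filterlim f F (locally l).
Proof.
  intros He0 Hlo Hhi Hlo0 Hhi0 Hb. apply filterlim_locally. intros eps.
  destruct (proj1 (filterlim_locally _ _) Hlo eps) as [d1 H1].
  destruct (proj1 (filterlim_locally _ _) Hhi eps) as [d2 H2].
  set (e := Rmin (Rmin d1 d2) e0 / 2).
  assert (He : 0 < e < Rmin (Rmin d1 d2) e0).
  { assert (0 < Rmin (Rmin d1 d2) e0)
      by (apply Rmin_pos; [apply Rmin_pos; apply cond_pos|exact He0]).
    unfold e. lra. }
  pose proof (Rmin_l (Rmin d1 d2) e0). pose proof (Rmin_r (Rmin d1 d2) e0).
  pose proof (Rmin_l d1 d2). pose proof (Rmin_r d1 d2).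
  apply (filter_imp (fun t => lo e <= f t <= hi e)); [|apply Hb; lra].
  intros t Ht.
  assert (Hl := H1 e ltac:(apply (proj2 (ball_Rabs _ _ _)); rewrite Rminus_0_r, Rabs_pos_eq; lra)).
  assert (Hh := H2 e ltac:(apply (proj2 (ball_Rabs _ _ _)); rewrite Rminus_0_r, Rabs_pos_eq; lra)).
  rewrite Hlo0 in Hl. rewrite Hhi0 in Hh.
  apply (proj1 (ball_Rabs _ _ _)), Rabs_def2 in Hl.
  apply (proj1 (ball_Rabs _ _ _)), Rabs_def2 in Hh.
  apply (proj2 (ball_Rabs _ _ _)), Rabs_def1; lra.
Qed.

Lemma is_lim_linear_sub_exp (be k de : R) : 0 < k -> 0 < de ->
  is_lim (fun y => be * y - k * exp (de * y)) p_infty m_infty.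
Proof.
  intros Hk Hde.
  assert (Hq : is_lim (fun y => exp (de * y) / (de * y)) p_infty p_infty).
  { apply (is_lim_comp (fun z => exp z / z) (fun y => de * y) p_infty p_infty p_infty);
      [apply is_lim_div_exp_p| |exists 0; easy].
    rewrite <- (Rbar_mult_pos_p_infty de Hde) at 2. apply is_lim_scal_l, is_lim_id. }
  apply (is_lim_ext_loc (fun y => y * (be - k * de * (exp (de * y) / (de * y))))).
  { exists 0. intros y Hy. field. split; [lra|]. apply Rgt_not_eq. nra. }
  apply (is_lim_mult _ _ _ p_infty m_infty); [apply is_lim_id| |easy].
  eapply is_lim_minus; [apply is_lim_const|apply is_lim_scal_l, Hq|].
  rewrite Rbar_mult_pos_p_infty by nra. easy.
Qed.

Lemma is_lim_Rpower_mul_exp_neg (be k de : R) : 0 < k -> 0 < de ->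
  is_lim (fun t => Rpower t be * exp (- (k * Rpower t de))) p_infty 0.
Proof.
  intros Hk Hde.
  apply (is_lim_ext_loc (fun t => exp (be * ln t - k * exp (de * ln t)))).
  { exists 0. intros t _. unfold Rpower. rewrite <- exp_plus. reflexivity. }
  apply (is_lim_comp exp _ p_infty 0 m_infty); [exact is_lim_exp_m| |exists 0; easy].
  apply (is_lim_comp (fun y => be * y - k * exp (de * y)) ln p_infty m_infty p_infty);
    [apply is_lim_linear_sub_exp; assumption|exact is_lim_ln_p|exists 0; easy].
Qed.

Lemma is_lim_Rpower_p_infty (de : R) : 0 < de -> is_lim (fun t => Rpower t de) p_infty p_infty.
Proof.
  intros Hde.
  apply (is_lim_comp exp (fun t => de * ln t) p_infty p_infty p_infty);
    [exact is_lim_exp_p| |exists 0; easy].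
  rewrite <- (Rbar_mult_pos_p_infty de Hde) at 2.
  apply is_lim_scal_l, is_lim_ln_p.
Qed.

Lemma scaled_increment_bounds (g Jt JT pt pT l e x : R) :
  0 <= g -> g * pt = 1 -> 0 <= g * pT < e -> Rabs (g * JT) < e -> e <= 1 -> 0 <= l -> x < 1 ->
  (1 - e) * l * (pt - pT) <= Jt - JT ->
  (1 - x) * (Jt - JT) <= (1 + e) * l * (pt - pT) ->
  (1 - e) * (1 - e) * l - e <= g * Jt <= e + (1 + e) * l / (1 - x).
Proof.
  intros Hg Hgpt HgpT HgJT He Hl Hx Hlow Hup. apply Rabs_def2 in HgJT.
  apply (Rmult_le_compat_l g) in Hlow, Hup; try exact Hg.
  assert (Hlow' : (1 - e) * l * (1 - g * pT) <= g * Jt - g * JT).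
  { replace (1 - g * pT) with (g * pt - g * pT) by lra.
    replace ((1 - e) * l * (g * pt - g * pT)) with (g * ((1 - e) * l * (pt - pT))) by ring. lra. }
  assert (Hup' : (1 - x) * (g * Jt - g * JT) <= (1 + e) * l * (1 - g * pT)).
  { replace (1 - g * pT) with (g * pt - g * pT) by lra.
    replace ((1 - x) * (g * Jt - g * JT)) with (g * ((1 - x) * (Jt - JT))) by ring.
    replace ((1 + e) * l * (g * pt - g * pT)) with (g * ((1 + e) * l * (pt - pT))) by ring. lra. }
  split.
  - assert ((1 - e) * l * (1 - e) <= (1 - e) * l * (1 - g * pT))
      by (apply Rmult_le_compat_l; [apply Rmult_le_pos|]; lra).
    nra.
  - assert (Hx' : 0 < 1 - x) by lra.
    assert (g * Jt - g * JT <= (1 + e) * l / (1 - x)).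
    { apply (Rmult_le_reg_l (1 - x)); [exact Hx'|].
      replace ((1 - x) * ((1 + e) * l / (1 - x))) with ((1 + e) * l) by (field; lra).
      assert (0 <= (1 + e) * l * (g * pT)) by (apply Rmult_le_pos; [apply Rmult_le_pos|]; lra).
      nra. }
    lra.
Qed.

Section Decreasing_weight.

Variables (a : R -> R) (gamma L : R).
Hypotheses (Hgamma : 0 < gamma < 1) (Ha_nonneg : forall x, 0 <= x -> 0 <= a x)
  (Ha_dec : decreasing_on_nonneg a) (Ha_pc : piecewise_continuous_on_nonneg a)
  (HL : 0 < L) (Ha_lim : is_lim (fun t => Rpower t gamma * a t) p_infty L).

Lemma a_pos (x : R) : 0 <= x -> 0 < a x.
Proof.
  intros Hx. destruct (Rle_lt_dec (a x) 0) as [Hax|Hax]; [exfalso|exact Hax].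
  (* otherwise a vanishes from x on, so t^gamma a(t) -> 0 *)
  assert (Hlim0 : is_lim (fun t => Rpower t gamma * a t) p_infty 0).
  { apply (is_lim_ext_loc (fun _ => 0)); [|apply is_lim_const].
    exists x. intros t Ht. assert (Hat : a t <= a x) by (apply Ha_dec; lra).
    pose proof (Ha_nonneg t ltac:(lra)). replace (a t) with 0 by lra. ring. }
  apply is_lim_unique in Hlim0. rewrite (is_lim_unique _ _ _ Ha_lim) in Hlim0.
  injection Hlim0. lra.
Qed.

Lemma a_integrable : ex_RInt_on_nonneg a.
Proof. exact (ex_RInt_on_nonneg_pc a Ha_pc). Qed.

Lemma RInt_a_ge_half (t : R) : 0 <= t -> t / 2 * a t <= RInt a 0 t.
Proof.
  intros Ht.
  rewrite <- (RInt_Chasles a 0 (t / 2) t) by (apply a_integrable; lra).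
  assert (Hhead : 0 <= RInt a 0 (t / 2)).
  { apply RInt_ge_0; [lra|apply a_integrable; lra|]. intros x Hx. apply Ha_nonneg. lra. }
  assert (Htail : RInt (fun _ => a t) (t / 2) t <= RInt a (t / 2) t).
  { apply RInt_le; [lra|apply ex_RInt_const|apply a_integrable; lra|].
    intros x Hx. apply Ha_dec; lra. }
  rewrite RInt_const in Htail.
  change (scal (t - t / 2) (a t)) with ((t - t / 2) * a t) in Htail.
  change (plus (RInt a 0 (t / 2)) (RInt a (t / 2) t)) with (RInt a 0 (t / 2) + RInt a (t / 2) t).
  lra.
Qed.

Lemma RInt_a_ge_Rpower :
  Rbar_locally p_infty (fun t => L / 4 * Rpower t (1 - gamma) <= RInt a 0 t).
Proof.
  destruct (proj2 (is_lim_spec _ _ _) Ha_lim (mkposreal (L / 2) ltac:(lra))) as [M HM].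
  exists (Rmax M 0). intros t Ht.
  assert (HtM : M < t) by (pose proof (Rmax_l M 0); lra).
  assert (Ht0 : 0 < t) by (pose proof (Rmax_r M 0); lra).
  specialize (HM t HtM). simpl in HM. apply Rabs_def2 in HM.
  assert (Hd : 0 < Rpower t (1 - gamma)) by apply exp_pos.
  eapply Rle_trans; [|apply RInt_a_ge_half; lra].
  rewrite (Rpower_split t gamma Ht0) at 2. nra.
Qed.

Lemma is_lim_Rpower_mul_exp_RInt_a (be mu : R) : 0 < mu ->
  is_lim (fun t => Rpower t be * exp (- (mu * RInt a 0 t))) p_infty 0.
Proof.
  intros Hmu.
  apply (is_lim_le_le_loc (fun _ => 0)
           (fun t => Rpower t be * exp (- (mu * (L / 4) * Rpower t (1 - gamma)))));
    [|apply is_lim_const|apply is_lim_Rpower_mul_exp_neg; nra].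
  destruct RInt_a_ge_Rpower as [M HM]. exists M. intros t Ht. split.
  - apply Rmult_le_pos; left; apply exp_pos.
  - apply Rmult_le_compat_l; [left; apply exp_pos|].
    apply exp_le_compat. specialize (HM t Ht). nra.
Qed.

Lemma is_lim_mul_a : is_lim (fun t => t * a t) p_infty p_infty.
Proof.
  apply (is_lim_ext_loc (fun t => Rpower t (1 - gamma) * (Rpower t gamma * a t))).
  { exists 0. intros t Ht. rewrite <- Rmult_assoc, <- (Rpower_split t gamma Ht). reflexivity. }
  assert (Hex : ex_Rbar_mult p_infty L) by (simpl; apply Rgt_not_eq, HL).
  assert (H := is_lim_mult _ _ p_infty p_infty L
                 (is_lim_Rpower_p_infty (1 - gamma) ltac:(lra)) Ha_lim Hex).
  rewrite Rbar_mult_comm, (Rbar_mult_pos_p_infty L HL) in H. exact H.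
Qed.

Lemma eventually_inv_le_a (e : R) : 0 < e -> Rbar_locally p_infty (fun t => 1 <= e * t * a t).
Proof.
  intros He. destruct (proj2 (is_lim_spec _ _ _) is_lim_mul_a (/ e)) as [M HM].
  exists M. intros t Ht. specialize (HM t Ht).
  apply (Rmult_lt_compat_l e) in HM; [|exact He].
  rewrite Rinv_r in HM by lra. rewrite Rmult_assoc. lra.
Qed.

Lemma eventually_Rpower_a_near (c e : R) : 0 < e -> Rbar_locally p_infty (fun t =>
  (1 - e) * Rpower L c * Rpower t (- (gamma * c)) <= Rpower (a t) c <=
  (1 + e) * Rpower L c * Rpower t (- (gamma * c))).
Proof.
  intros He.
  assert (HLc : 0 < Rpower L c) by apply exp_pos.
  assert (Hlim : filterlim (fun t => Rpower (Rpower t gamma * a t) c)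
                   (Rbar_locally p_infty) (locally (Rpower L c)))
    by exact (filterlim_comp _ _ _ (fun t => Rpower t gamma * a t) (fun y => Rpower y c)
                (Rbar_locally p_infty) (locally L) _ Ha_lim (Rpower_continuous c L HL)).
  apply (filter_imp (fun t => 0 < t /\
           ball (Rpower L c) (e * Rpower L c) (Rpower (Rpower t gamma * a t) c))).
  - intros t [Ht Hb]. apply (proj1 (ball_Rabs _ _ _)), Rabs_def2 in Hb.
    assert (Hat := a_pos t ltac:(lra)).
    assert (HP : 0 < Rpower t (- (gamma * c))) by apply exp_pos.
    assert (Hid : Rpower (a t) c = Rpower (Rpower t gamma * a t) c * Rpower t (- (gamma * c))).
    { rewrite <- Rpower_mult_distr by (try apply exp_pos; exact Hat).
      rewrite Rpower_mult, Rmult_comm, <- Rmult_assoc, <- Rpower_plus.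
      replace (- (gamma * c) + gamma * c) with 0 by ring. rewrite Rpower_O by lra. ring. }
    rewrite Hid. split; nra.
  - apply filter_and; [exists 0; tauto|].
    apply (proj1 (filterlim_locally _ _) Hlim (mkposreal _ (Rmult_lt_0_compat _ _ He HLc))).
Qed.

Variables (mu c : R).
Hypotheses (Hmu : 0 < mu) (Hc : 0 < c).

Definition weight (s : R) : R := exp (mu * RInt a 0 s).
Definition integrand (s : R) : R := Rpower (a s) (c + 1) * weight s.
Definition comparison (t : R) : R := Rpower t (- (gamma * c)) * weight t.

Lemma continuous_exp_scal (y : R) : continuous (fun z => exp (mu * z)) y.
Proof. apply (@ex_derive_continuous R_AbsRing R_NormedModule). auto_derive. exact I. Qed.

Lemma weight_continuous (x : R) : 0 < x -> continuous weight x.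
Proof.
  intros Hx. apply (continuous_comp (fun s => RInt a 0 s) (fun z => exp (mu * z))).
  - apply continuous_RInt_0; [exact a_integrable|exact Hx].
  - apply continuous_exp_scal.
Qed.

Lemma weight_at_right_0 : filterlim weight (at_right 0) (locally (weight 0)).
Proof.
  unfold weight. rewrite RInt_point.
  apply (filterlim_comp _ _ _ (fun s => RInt a 0 s) (fun z => exp (mu * z)) _ (locally 0)).
  - apply (filterlim_RInt_0_at_right a 1 (a 0)); [lra|exact a_integrable|].
    intros x Hx. rewrite Rabs_pos_eq by (apply Ha_nonneg; lra). apply Ha_dec; lra.
  - apply continuous_exp_scal.
Qed.

Lemma pc_on_integrand (b : R) (l : list R) : 0 < b -> pc_on a b l -> pc_on integrand b l.
Proof.
  intros Hb Hl.
  apply pc_on_mult; [|intros x Hx; apply weight_continuous; lra|exact weight_at_right_0].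
  apply (pc_on_comp (fun y => Rpower y (c + 1)) a b (a b)); [exact Hl| |].
  - intros x Hx. apply Ha_dec; lra.
  - intros y Hy. apply Rpower_continuous. pose proof (a_pos b ltac:(lra)). lra.
Qed.

Lemma integrand_integrable : ex_RInt_on_nonneg integrand.
Proof.
  apply ex_RInt_on_nonneg_pc. intros b Hb. destruct (Ha_pc b Hb) as [l Hl].
  exists l. apply pc_on_integrand; assumption.
Qed.

Lemma breakpoints (t : R) : 0 < t -> exists l : list R,
  forall x, 0 < x < t -> ~ In x l -> continuous a x /\ continuous integrand x.
Proof.
  intros Ht. destruct (Ha_pc (t + 1) ltac:(lra)) as [l Hl]. exists l. intros x Hx Hnl.
  split; [apply (proj1 Hl)|apply (proj1 (pc_on_integrand (t + 1) l ltac:(lra) Hl))];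
    assumption || lra.
Qed.

Lemma is_derive_weight (x : R) : 0 < x -> continuous a x ->
  is_derive weight x (mu * a x * weight x).
Proof.
  intros Hx Hax.
  assert (HA := is_derive_RInt_0 a x a_integrable Hx Hax).
  exact (is_derive_comp exp (fun s => mu * RInt a 0 s) x _ _ (is_derive_exp _)
           (is_derive_scal _ x mu _ HA)).
Qed.

Lemma comparison_continuous (x : R) : 0 < x -> continuous comparison x.
Proof.
  intros Hx. apply (continuous_mult (fun z => Rpower z (- (gamma * c))) weight).
  - apply Rpower_continuous, Hx.
  - apply weight_continuous, Hx.
Qed.

Lemma is_derive_comparison (x : R) : 0 < x -> continuous a x ->
  is_derive comparison x ((mu * a x - gamma * c / x) * comparison x).
Proof.
  intros Hx Hax.
  assert (HP : is_derive (fun z => Rpower z (- (gamma * c))) x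
                 (- (gamma * c) * Rpower x (- (gamma * c) - 1)))
    by (apply is_derive_Reals, derivable_pt_lim_power, Hx).
  assert (Hpow : Rpower x (- (gamma * c) - 1) = Rpower x (- (gamma * c)) / x).
  { unfold Rminus. rewrite Rpower_plus, (Rpower_Ropp x 1), Rpower_1 by exact Hx. reflexivity. }
  rewrite Hpow in HP.
  assert (H := is_derive_mult _ _ x _ _ HP (is_derive_weight x Hx Hax)
                 (fun u v => Rmult_comm u v)).
  unfold comparison.
  replace ((mu * a x - gamma * c / x) * (Rpower x (- (gamma * c)) * weight x))
    with (- (gamma * c) * (Rpower x (- (gamma * c)) / x) * weight x
          + Rpower x (- (gamma * c)) * (mu * a x * weight x)) by (field; lra).
  exact H.
Qed.

Lemma combination_nondecreasing (k1 k2 T t : R) : 0 < T <= t ->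
  (forall x, T < x < t -> continuous a x ->
     0 <= k1 * integrand x + k2 * ((mu * a x - gamma * c / x) * comparison x)) ->
  k1 * RInt integrand 0 T + k2 * comparison T <= k1 * RInt integrand 0 t + k2 * comparison t.
Proof.
  intros HT Hd. destruct (breakpoints t ltac:(lra)) as [l Hl].
  apply (le_of_is_derive_nonneg (fun z => k1 * RInt integrand 0 z + k2 * comparison z)
           (fun z => k1 * integrand z + k2 * ((mu * a z - gamma * c / z) * comparison z)) l);
    [lra| |].
  - intros x Hx.
    apply (continuous_plus (fun z => k1 * RInt integrand 0 z) (fun z => k2 * comparison z)).
    + apply (continuous_scal_r k1 (fun z => RInt integrand 0 z)), continuous_RInt_0;
        [exact integrand_integrable|lra].
    + apply (continuous_scal_r k2 comparison), comparison_continuous. lra.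
  - intros x Hx Hnl. destruct (Hl x ltac:(lra) Hnl) as [Hax Hix]. split; [|apply Hd; assumption].
    apply (is_derive_plus (fun z => k1 * RInt integrand 0 z) (fun z => k2 * comparison z)).
    + apply (is_derive_scal (fun z => RInt integrand 0 z)), is_derive_RInt_0;
        [exact integrand_integrable|lra|exact Hix].
    + apply (is_derive_scal comparison), is_derive_comparison; [lra|exact Hax].
Qed.

Lemma integrand_increment_ge (e T t : R) : 0 < T <= t -> e <= 1 ->
  (forall s, T <= s -> (1 - e) * Rpower L c * Rpower s (- (gamma * c)) <= Rpower (a s) c) ->
  (1 - e) * (Rpower L c / mu) * (comparison t - comparison T) <=
  RInt integrand 0 t - RInt integrand 0 T.
Proof.
  intros HT He Hlow.
  enough (1 * RInt integrand 0 T + - ((1 - e) * (Rpower L c / mu)) * comparison T <=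
          1 * RInt integrand 0 t + - ((1 - e) * (Rpower L c / mu)) * comparison t) by lra.
  apply combination_nondecreasing; [exact HT|]. intros x Hx _.
  assert (HA := a_pos x ltac:(lra)). assert (HP : 0 < Rpower x (- (gamma * c))) by apply exp_pos.
  assert (HW : 0 < weight x) by apply exp_pos. assert (HLc : 0 < Rpower L c) by apply exp_pos.
  assert (Hq : 0 <= gamma * c / x) by (apply Rdiv_le_0_compat; nra).
  specialize (Hlow x ltac:(lra)).
  unfold integrand, comparison. rewrite Rpower_succ by exact HA.
  replace (1 * (Rpower (a x) c * a x * weight x) + - ((1 - e) * (Rpower L c / mu)) *
            ((mu * a x - gamma * c / x) * (Rpower x (- (gamma * c)) * weight x)))
    with ((Rpower (a x) c - (1 - e) * Rpower L c * Rpower x (- (gamma * c))) * (a x * weight x)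
          + (1 - e) * (Rpower L c / mu) * (gamma * c / x) * (Rpower x (- (gamma * c)) * weight x))
    by (field; lra).
  apply Rplus_le_le_0_compat.
  - apply Rmult_le_pos; [lra|]. apply Rmult_le_pos; lra.
  - apply Rmult_le_pos; [|apply Rmult_le_pos; lra]. apply Rmult_le_pos; [|exact Hq].
    apply Rmult_le_pos; [lra|]. apply Rdiv_le_0_compat; lra.
Qed.

Lemma integrand_increment_le (e T t : R) : 0 < T <= t -> gamma * c * e <= mu ->
  (forall s, T <= s -> Rpower (a s) c <= (1 + e) * Rpower L c * Rpower s (- (gamma * c))) ->
  (forall s, T <= s -> 1 <= e * s * a s) ->
  (1 - gamma * c * e / mu) * (RInt integrand 0 t - RInt integrand 0 T) <=
  (1 + e) * (Rpower L c / mu) * (comparison t - comparison T).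
Proof.
  intros HT He Hup Hinv.
  enough (- (1 - gamma * c * e / mu) * RInt integrand 0 T
            + (1 + e) * (Rpower L c / mu) * comparison T <=
          - (1 - gamma * c * e / mu) * RInt integrand 0 t
            + (1 + e) * (Rpower L c / mu) * comparison t) by lra.
  apply combination_nondecreasing; [exact HT|]. intros x Hx _.
  assert (HA := a_pos x ltac:(lra)). assert (HP : 0 < Rpower x (- (gamma * c))) by apply exp_pos.
  assert (HW : 0 < weight x) by apply exp_pos. assert (HLc : 0 < Rpower L c) by apply exp_pos.
  specialize (Hup x ltac:(lra)). specialize (Hinv x ltac:(lra)).
  assert (Hxa : 0 < x * a x) by (apply Rmult_lt_0_compat; lra).
  assert (He0 : 0 < e)
    by (rewrite Rmult_assoc in Hinv; destruct (Rle_lt_dec e 0); [nra|assumption]).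
  (* [1 <= e x a(x)] bounds the [gamma c / x] term of the derivative of [comparison] *)
  assert (Hq : gamma * c / x <= gamma * c * e * a x).
  { apply (Rmult_le_reg_r x); [lra|].
    unfold Rdiv. rewrite Rmult_assoc, Rinv_l, Rmult_1_r by lra.
    replace (gamma * c * e * a x * x) with (gamma * c * (e * x * a x)) by ring.
    rewrite <- (Rmult_1_r (gamma * c)) at 1. apply Rmult_le_compat_l; [nra|exact Hinv]. }
  assert (Hk : 0 <= 1 - gamma * c * e / mu).
  { apply (Rmult_le_reg_r mu); [exact Hmu|]. unfold Rdiv.
    rewrite Rmult_minus_distr_r, Rmult_assoc, Rinv_l, Rmult_1_r by lra. lra. }
  unfold integrand, comparison. rewrite Rpower_succ by exact HA.
  replace (- (1 - gamma * c * e / mu) * (Rpower (a x) c * a x * weight x) +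
           (1 + e) * (Rpower L c / mu) *
            ((mu * a x - gamma * c / x) * (Rpower x (- (gamma * c)) * weight x)))
    with ((1 - gamma * c * e / mu) *
            (((1 + e) * Rpower L c * Rpower x (- (gamma * c)) - Rpower (a x) c) * (a x * weight x))
          + (1 + e) * (Rpower L c / mu) * (gamma * c * e * a x - gamma * c / x) *
            (Rpower x (- (gamma * c)) * weight x))
    by (field; lra).
  apply Rplus_le_le_0_compat.
  - apply Rmult_le_pos; [exact Hk|]. apply Rmult_le_pos; [lra|]. apply Rmult_le_pos; lra.
  - apply Rmult_le_pos; [|apply Rmult_le_pos; lra]. apply Rmult_le_pos; [|lra].
    apply Rmult_le_pos; [lra|]. apply Rdiv_le_0_compat; lra.
Qed.

Lemma RInt_integrand_factor (t : R) : 0 <= t ->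
  RInt (fun s => Rpower (a s) (c + 1) * exp (- mu * RInt a s t)) 0 t =
  exp (- (mu * RInt a 0 t)) * RInt integrand 0 t.
Proof.
  intros Ht.
  rewrite <- (@RInt_scal R_CompleteNormedModule) by (apply integrand_integrable; lra).
  apply RInt_ext. rewrite Rmin_left, Rmax_right by lra. intros s Hs.
  rewrite <- (RInt_Chasles a 0 s t) by (apply a_integrable; lra).
  change (scal ?u ?v) with (u * v). change (plus ?u ?v) with (u + v).
  unfold integrand, weight.
  replace (- mu * RInt a s t) with (- (mu * (RInt a 0 s + RInt a s t)) + mu * RInt a 0 s) by ring.
  rewrite exp_plus. lazymatch goal with |- ?u = ?v => change (@eq R u v) end. ring.
Qed.

Lemma scale_mul_comparison (t : R) :
  Rpower t (gamma * c) * exp (- (mu * RInt a 0 t)) * comparison t = 1.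
Proof.
  unfold comparison, weight. rewrite Rpower_Ropp, exp_Ropp.
  field. split; apply Rgt_not_eq, exp_pos.
Qed.

Lemma eventually_a_bounds (e : R) : 0 < e -> exists T, 0 < T /\ forall s, T <= s ->
  ((1 - e) * Rpower L c * Rpower s (- (gamma * c)) <= Rpower (a s) c <=
   (1 + e) * Rpower L c * Rpower s (- (gamma * c))) /\ 1 <= e * s * a s.
Proof.
  intros He.
  destruct (filter_and _ _ (eventually_Rpower_a_near c e He) (eventually_inv_le_a e He))
    as [M HM].
  exists (Rmax M 0 + 1). pose proof (Rmax_l M 0). pose proof (Rmax_r M 0).
  split; [lra|]. intros s Hs. apply HM. lra.
Qed.

Lemma eventually_scaled_integral_bounds (e : R) : 0 < e < 1 -> gamma * c * e < mu ->
  Rbar_locally p_infty (fun t =>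
    (1 - e) * (1 - e) * (Rpower L c / mu) - e <=
    Rpower t (gamma * c) * exp (- (mu * RInt a 0 t)) * RInt integrand 0 t <=
    e + (1 + e) * (Rpower L c / mu) / (1 - gamma * c * e / mu)).
Proof.
  intros He Hemu.
  destruct (eventually_a_bounds e ltac:(lra)) as [T [HT Ha]].
  set (K := Rabs (RInt integrand 0 T) + comparison T + 1).
  assert (HpT : 0 < comparison T) by (apply Rmult_lt_0_compat; apply exp_pos).
  assert (HK : 0 < K) by (unfold K; pose proof (Rabs_pos (RInt integrand 0 T)); lra).
  destruct (proj2 (is_lim_spec _ _ _) (is_lim_Rpower_mul_exp_RInt_a (gamma * c) mu Hmu)
              (mkposreal (e / K) ltac:(apply Rdiv_lt_0_compat; lra))) as [N HN].
  exists (Rmax N T). intros t Ht. pose proof (Rmax_l N T). pose proof (Rmax_r N T).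
  set (g := Rpower t (gamma * c) * exp (- (mu * RInt a 0 t))).
  assert (Hg : 0 < g) by (apply Rmult_lt_0_compat; apply exp_pos).
  assert (HgK : g * K < e).
  { specialize (HN t ltac:(lra)). simpl in HN. fold g in HN.
    rewrite Rminus_0_r, Rabs_pos_eq in HN by lra.
    replace e with (e / K * K) by (field; lra). apply Rmult_lt_compat_r; lra. }
  pose proof (Rabs_pos (RInt integrand 0 T)).
  apply (scaled_increment_bounds g _ (RInt integrand 0 T) (comparison t) (comparison T));
    try lra.
  - apply scale_mul_comparison.
  - split; [apply Rmult_le_pos|unfold K in HgK]; nra.
  - rewrite Rabs_mult, (Rabs_pos_eq g) by lra. unfold K in HgK. nra.
  - left. apply Rdiv_lt_0_compat; [apply exp_pos|exact Hmu].
  - apply (Rmult_lt_reg_r mu); [exact Hmu|]. unfold Rdiv.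
    rewrite Rmult_assoc, Rinv_l, Rmult_1_r, Rmult_1_l by lra. exact Hemu.
  - apply integrand_increment_ge; [lra|lra|]. intros s Hs. apply (Ha s Hs).
  - apply integrand_increment_le; [lra|lra| |]; intros s Hs; apply (Ha s Hs).
Qed.

Lemma is_lim_scaled_RInt_integrand :
  is_lim (fun t => Rpower t (gamma * c) *
            RInt (fun s => Rpower (a s) (c + 1) * exp (- mu * RInt a s t)) 0 t)
    p_infty (Rpower L c / mu).
Proof.
  apply (is_lim_ext_loc
           (fun t => Rpower t (gamma * c) * exp (- (mu * RInt a 0 t)) * RInt integrand 0 t)).
  { exists 0. intros t Ht. rewrite RInt_integrand_factor by lra. ring. }
  assert (Hbe : 0 < gamma * c) by nra.
  apply (filterlim_of_continuous_bounds _ _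
           (fun e => (1 - e) * (1 - e) * (Rpower L c / mu) - e)
           (fun e => e + (1 + e) * (Rpower L c / mu) / (1 - gamma * c * e / mu))
           _ (Rmin 1 (mu / (gamma * c)))).
  - apply Rmin_pos; [lra|apply Rdiv_lt_0_compat; lra].
  - apply (@ex_derive_continuous R_AbsRing R_NormedModule). auto_derive. exact I.
  - apply (@ex_derive_continuous R_AbsRing R_NormedModule). auto_derive.
    replace (1 - gamma * c * 0 / mu) with 1 by (field; lra). lra.
  - ring.
  - field. replace (1 - gamma * c * 0 / mu) with 1 by (field; lra). lra.
  - intros e He. pose proof (Rmin_l 1 (mu / (gamma * c))). pose proof (Rmin_r 1 (mu / (gamma * c))).
    apply eventually_scaled_integral_bounds; [lra|].
    replace mu with (gamma * c * (mu / (gamma * c))) by (field; lra).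
    apply Rmult_lt_compat_l; lra.
Qed.

End Decreasing_weight.

Theorem lemma2 (gamma : R) (a : R -> R) (L mu p : R) :
  1 / 2 < gamma < 1 ->
  (forall x, 0 <= x -> 0 <= a x) ->
  decreasing_on_nonneg a ->
  bounded_on_nonneg a ->
  piecewise_continuous_on_nonneg a ->
  0 < L ->
  is_lim (fun t => Rpower t gamma * a t) p_infty L ->
  0 < mu -> 2 < p ->
  (* e^{-mu int_0^t a} = o(t^{-p gamma/2}) *)
  is_lim (fun t => Rabs (exp (- mu * RInt a 0 t) / Rpower t (- (p * gamma / 2))))
    p_infty 0 /\
  is_lim (fun t => Rpower t (p * gamma / 2) *
      RInt (fun s => Rpower (a s) ((p + 2) / 2) * exp (- mu * RInt a s t)) 0 t)
    p_infty (Rpower L (p / 2) / mu).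
Proof.
  (* boundedness follows from monotonicity and nonnegativity; gamma > 1/2 and p > 2 are
     only used as gamma > 0 and p > 0 *)
  intros Hgamma Hnonneg Hdec _ Hpc HL Hlim Hmu Hp.
  assert (Hgamma' : 0 < gamma < 1) by lra.
  split.
  - apply (is_lim_ext_loc (fun t => Rabs (Rpower t (p * gamma / 2) * exp (- (mu * RInt a 0 t))))).
    { exists 0. intros t _. f_equal. rewrite Rpower_Ropp, Ropp_mult_distr_l.
      field. apply Rgt_not_eq, exp_pos. }
    replace (Finite 0) with (Rbar_abs 0) by (simpl; now rewrite Rabs_R0).
    apply is_lim_Rabs, (is_lim_Rpower_mul_exp_RInt_a a gamma L); assumption.
  - replace (p * gamma / 2) with (gamma * (p / 2)) by field.
    replace ((p + 2) / 2) with (p / 2 + 1) by field.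
    apply is_lim_scaled_RInt_integrand; assumption || lra.
Qed.
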